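(* Let $K\subseteq\mathcal I_{int}$ be finite, let $A=(Q,\mathsf{init},2^{\Sigma\cup K\cup\{\mathsf{anch}\}},\delta,F)$ be an NFA whose language consists of collapsed $K$-interval words over $\Sigma$, and let $\mathsf{seq}$ be a type over $K$. Then every word accepted by $A_{\mathsf{seq}}$ is a normalized word of type $\mathsf{seq}$, i.e. $L(A_{\mathsf{seq}})\subseteq\mathsf{Norm}(W_{\mathsf{seq}})$.
   Context: Fix a finite set $\Sigma$ of propositions; $\mathcal I_{int}$ is the set of open, half-open or closed real intervals with endpoints in $\mathbb Z\cup\{-\infty,\infty\}$. Interval words: for finite $K\subseteq\mathcal I_{int}$ and a fresh symbol $\mathsf{anch}$, a $K$-interval word over $\Sigma$ is a finite word $w=a_1\cdots a_n$ with $a_j\subseteq\Sigma\cup K\cup\{\mathsf{anch}\}$ such that exactly one position $i$, denoted $\mathsf{anch}(w)$, has $\mathsf{anch}\in a_i$, and $a_i\subseteq\Sigma\cup\{\mathsf{anch}\}$ there. Position $j$ is $I$-time restricted iff $I\in a_j$. $w$ is collapsed iff every $a_j$ contains at most one element of $K$. $\mathsf{first}(w,I)$, $\mathsf{last}(w,I)$ are the least and greatest $I$-time restricted positions ($\bot$ if none). For a collapsed $K$-interval word $w$, $\mathsf{Norm}(w)$ is the $K$-interval word $b_1\cdots b_n$ with $b_j\cap(\Sigma\cup\{\mathsf{anch}\})=a_j\cap(\Sigma\cup\{\mathsf{anch}\})$ and, for $I\in K$, $I\in b_j$ iff $j\in\{\mathsf{first}(w,I),\mathsf{last}(w,I)\}$;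 for a set $L$ of words, $\mathsf{Norm}(L)=\{\mathsf{Norm}(w):w\in L\}$. Types: for a collapsed $K$-interval word $w$, let $\mathsf{Boundary}(w)$ be the set of positions that are $\mathsf{anch}(w)$ or equal to $\mathsf{first}(w,I)$ or $\mathsf{last}(w,I)$ for some $I\in K$; listing them as $p_1<\dots<p_m$, the type of $w$ is the word $c_1\cdots c_m$ over $K\cup\{\mathsf{anch}\}$ where $c_k$ is the unique element of $a_{p_k}\setminus\Sigma$. A type over $K$ is any word over $K\cup\{\mathsf{anch}\}$ arising this way (it contains $\mathsf{anch}$ exactly once and each $I\in K$ at most twice). $W_{\mathsf{seq}}$ is the set of collapsed $K$-interval words of type $\mathsf{seq}$. The automaton $A_{\mathsf{seq}}$: for $A$ as in the claim and a type $\mathsf{seq}=c_1\cdots c_m$, $A_{\mathsf{seq}}=(Q\times\{1,\dots,m+1\},(\mathsf{init},1),2^{\Sigma\cup K\cup\{\mathsf{anch}\}},\delta_{\mathsf{seq}},F\times\{m+1\})$ where, for $q\in Q$ and a letter $S$: for $1\le i\le m$, (i) if $c_i\in S$ then $\delta_{\mathsf{seq}}((q,i),S)=\delta(q,S)\times\{i+1\}$; (ii) if $c_i\notin S$ and $S\not\subseteq\Sigma$ then $\delta_{\mathsf{seq}}((q,i),S)=\emptyset$; (iii) if $S\subseteq\Sigma$ then $\delta_{\mathsf{seq}}((q,i),S)=\big(\delta(q,S)\cup\bigcup_{I'\in K_i}\delta(q,S\cup\{I'\})\big)\times\{i\}$, where $K_i=\{I'\in K:\exists i'<i\le i''\text{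 with }c_{i'}=c_{i''}=I'\}$; and $\delta_{\mathsf{seq}}((q,m+1),S)=\delta(q,S)\times\{m+1\}$ if $S\subseteq\Sigma$ and $\emptyset$ otherwise. *)

From HB Require Import structures.
From mathcomp Require Import all_boot all_order all_algebra.
From mathcomp Require Import finmap.
Set Implicit Arguments. Unset Strict Implicit. Unset Printing Implicit Defensive.
Local Open Scope fset_scope.

(* An endpoint is [Some z] (z : int) or [None] (= -oo as a lower endpoint,
   = +oo as an upper endpoint); the boolean says whether the endpoint is
   included (closed). *)
Definition bound := option int.
Definition zinterval := ((bound * bool) * (bound * bool))%type.
Definition interval_ok (I : zinterval) : bool :=
  let: ((lo, clo), (hi, chi)) := I in
  ((lo != None) || ~~ clo) && ((hi != None) || ~~ chi).

Definition sym (Sigma : finType) (K : {fset zinterval}) : finType :=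
  ((Sigma + K) + unit)%type.
Definition letter (Sigma : finType) (K : {fset zinterval}) := {set sym Sigma K}.

Section Words.
Variables (Sigma : finType) (K : {fset zinterval}).

Definition inS (a : Sigma) : sym Sigma K := inl (inl a).
Definition inK (I : K) : sym Sigma K := inl (inr I).
Definition anch : sym Sigma K := inr tt.

Definition propsym : {set sym Sigma K} :=
  [set x | if x is inl (inl _) then true else false].

Definition embed (c : (K + unit)%type) : sym Sigma K :=
  match c with inl k => inK k | inr _ => anch end.

Implicit Types (w : seq (letter Sigma K)) (S : letter Sigma K).

Definition is_interval_word w : bool :=
  (count (fun S => anch \in S) w == 1%N) &&
  all (fun S => (anch \in S) ==> [forall I : K, inK I \notin S]) w.

Definition collapsed w : bool :=
  all (fun S => #|[set I : K | inK I \in S]| <= 1)%N w.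

Definition Kpos w (I : K) : seq nat :=
  [seq j <- iota 0 (size w) | inK I \in nth set0 w j].
Definition firstpos w (I : K) : option nat := ohead (Kpos w I).
Definition lastpos w (I : K) : option nat := ohead (rev (Kpos w I)).

Definition Norm w : seq (letter Sigma K) :=
  [seq [set x : sym Sigma K |
          match x with
          | inl (inr k) => (firstpos w k == Some j) || (lastpos w k == Some j)
          | _ => x \in nth set0 w j
          end] | j <- iota 0 (size w)].

Definition boundary w (j : nat) : bool :=
  (j < size w)%N &&
  ((anch \in nth set0 w j) ||
   [exists I : K, (firstpos w I == Some j) || (lastpos w I == Some j)]).

(* the element of a letter outside Σ (unique for boundary letters of a
   collapsed zinterval word) *)
Definition elt_of S : option (K + unit)%type :=
  if anch \in S then Some (inr tt)
  else omap inl [pick I : K | inK I \in S].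

Definition typeof w : seq (K + unit)%type :=
  pmap (fun j => elt_of (nth set0 w j)) [seq j <- iota 0 (size w) | boundary w j].

Definition is_type (sq : seq (K + unit)%type) : Prop :=
  exists w, [/\ is_interval_word w, collapsed w & typeof w = sq].

Definition W_seq (sq : seq (K + unit)%type) w : Prop :=
  [/\ is_interval_word w, collapsed w & typeof w = sq].

End Words.

Fixpoint reach (Q X : Type) (d : Q -> X -> Q -> bool) (q : Q) (w : seq X)
    (q' : Q) : Prop :=
  match w with
  | [::] => q = q'
  | a :: w' => exists q1, d q a q1 /\ reach d q1 w' q'
  end.

Definition accepts (Q X : Type) (d : Q -> X -> Q -> bool) (init : Q)
    (fin : Q -> bool) (w : seq X) : Prop :=
  exists qf, reach d init w qf /\ fin qf.

Definition accA (Sigma : finType) (K : {fset zinterval}) (Q : finType)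
    (init : Q) (delta : Q -> letter Sigma K -> {set Q}) (F : {set Q})
    (w : seq (letter Sigma K)) : Prop :=
  accepts (fun q S q' => q' \in delta q S) init (fun q => q \in F) w.

Section Aseq.
Variables (Sigma : finType) (K : {fset zinterval}) (Q : finType).
Variables (delta : Q -> letter Sigma K -> {set Q}) (sq : seq (K + unit)%type).

Let m := size sq.
(* c_i, 1-based (1 <= i <= m) *)
Definition cseq (i : nat) : (K + unit)%type := nth (inr tt) sq i.-1.

Definition Kset (i : nat) : {set K} :=
  [set I : K | [exists i1 : 'I_m.+1, exists i2 : 'I_m.+1,
     [&& (0 < i1)%N, (i1 < i)%N, (i <= i2)%N,
         cseq i1 == inl I & cseq i2 == inl I]]].

(* transition relation of A_seq on states Q × {1,...,m+1}
   (states with index outside 1..m+1 have no transitions) *)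
Definition delta_seq (p : Q * nat) (S : letter Sigma K) (p' : Q * nat) : bool :=
  let: (q, i) := p in
  let: (q', i') := p' in
  if (1 <= i <= m)%N then
    if @embed Sigma K (cseq i) \in S then (q' \in delta q S) && (i' == i.+1)
    else if ~~ (S \subset propsym Sigma K) then false
    else (i' == i) &&
         ((q' \in delta q S) ||
          [exists I : K, (I \in Kset i) && (q' \in delta q (@inK Sigma K I |: S))])
  else if i == m.+1 then
    (S \subset propsym Sigma K) && (q' \in delta q S) && (i' == m.+1)
  else false.

Definition accAseq (init : Q) (F : {set Q}) (w : seq (letter Sigma K)) : Prop :=
  accepts delta_seq (init, 1%N) (fun p => (p.1 \in F) && (p.2 == m.+1)) w.

End Aseq.

From HB Require Import structures.
From mathcomp Require Import all_boot all_order all_algebra.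
From mathcomp Require Import finmap zify.
Set Implicit Arguments. Unset Strict Implicit. Unset Printing Implicit Defensive.

(* A run of A_seq on w' keeps in its second component the stage i, which is
   1 + the number of letters read so far that are not subsets of Σ; such a
   letter must contain c_i and is read by A unchanged, while a Σ-letter S may
   be read by A as S or as S ∪ {I'} with I' ∈ K_i.  Lifting the run therefore
   yields a word w accepted by A (hence a collapsed interval word) that
   differs from w' only by K-elements added to Σ-letters.  We then show, for
   such a lift, that the boundary positions of w are exactly the non-Σ
   positions of w' (so typeof w = seq) and that I ∈ w'_j iff j is the first
   or last I-position of w (so Norm w = w').  The only property of the type
   seq used is that each I ∈ K occurs in it at most twice: an I-position of w
   strictly between two I-boundaries would produce three occurrences. *)

Lemma ohead_sorted_ltn (s : seq nat) j : sorted ltn s ->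
  (ohead s == Some j) = (j \in s) && all (fun y => j <= y) s.
Proof.
case: s => [|x s] //= s_sorted.
have x_min := order_path_min ltn_trans s_sorted.
have -> : (Some x == Some j) = (j == x) by rewrite eq_sym.
rewrite in_cons; case: (eqVneq j x) => [->|j_neq_x] /=.
  by rewrite leqnn; apply/esym/allP => y /(allP x_min)/ltnW.
apply/esym/negP => /andP [j_in /andP [j_le_x _]].
by have := allP x_min _ j_in; rewrite ltnNge j_le_x.
Qed.

Lemma olast_sorted_ltn (s : seq nat) j : sorted ltn s ->
  (ohead (rev s) == Some j) = (j \in s) && all (fun y => y <= j) s.
Proof.
rewrite -rev_sorted -mem_rev -all_rev; case: (rev s) => [|x t] //= t_sorted.
have x_max := order_path_min (leT := fun x y => y < x)
  (fun _ _ _ lt1 lt2 => ltn_trans lt2 lt1) t_sorted.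
have -> : (Some x == Some j) = (j == x) by rewrite eq_sym.
rewrite in_cons; case: (eqVneq j x) => [->|j_neq_x] /=.
  by rewrite leqnn; apply/esym/allP => y /(allP x_max)/ltnW.
apply/esym/negP => /andP [j_in /andP [x_le_j _]].
by have := allP x_max _ j_in; rewrite ltnNge x_le_j.
Qed.

Lemma extremity_sorted_ltn (s : seq nat) j : sorted ltn s ->
  ((ohead s == Some j) || (ohead (rev s) == Some j)) =
  (j \in s) && ~~ (has (fun y => y < j) s && has (fun y => j < y) s).
Proof.
move=> s_sorted; rewrite ohead_sorted_ltn // olast_sorted_ltn // -andb_orr.
congr (_ && _); rewrite negb_and -!all_predC.
by congr (_ || _); apply: eq_all => y /=; rewrite -leqNgt.
Qed.

Lemma count_eq_Some_uniq (T : eqType) (o : option T) (s : seq T) :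
  uniq s -> count (fun j => o == Some j) s <= 1.
Proof.
case: o => [k|] s_uniq; last by rewrite (eq_count (a2 := pred0)) // count_pred0.
rewrite (eq_count (a2 := pred1 k)); last by move=> j /=; rewrite eq_sym.
by rewrite count_uniq_mem // leq_b1.
Qed.

Lemma three_nth_count (T : eqType) (x0 x : T) (s : seq T) a b c :
  a < b -> b < c -> c < size s ->
  nth x0 s a = x -> nth x0 s b = x -> nth x0 s c = x -> 2 < count (pred1 x) s.
Proof.
move=> ab bc cs sa sb sc.
rewrite -(mkseq_nth x0 s) /mkseq count_map -size_filter.
have -> : 3 = size [:: a; b; c] by [].
apply: uniq_leq_size.
  by rewrite /= !inE !negb_or (ltn_eqF ab) (ltn_eqF (ltn_trans ab bc)) (ltn_eqF bc).
move=> y; rewrite !inE mem_filter mem_iota /= => /or3P [] /eqP ->.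
- by rewrite sa eqxx /=; lia.
- by rewrite sb eqxx /=; lia.
- by rewrite sc eqxx /=; lia.
Qed.

Lemma count_pmap (A B : Type) (g : A -> option B) (P : pred B) (s : seq A) :
  count P (pmap g s) = count (fun x => if g x is Some y then P y else false) s.
Proof. by elim: s => //= x s IH; case: (g x) => [y|] /=; rewrite IH. Qed.

Lemma pmap_some (A : eqType) (B : Type) (g : A -> option B) (f : A -> B) s :
  {in s, forall x, g x = Some (f x)} -> pmap g s = map f s.
Proof.
elim: s => //= x s IH gf.
by rewrite gf ?mem_head //= IH // => y y_in; apply: gf; rewrite in_cons y_in orbT.
Qed.

Lemma count_take_mono T (p : pred T) s j1 j2 : j1 <= j2 ->
  count p (take j1 s) <= count p (take j2 s).
Proof.
move=> le12; rewrite -(minn_idPl le12) take_min.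
by rewrite -{2}(cat_take_drop j1 (take j2 s)) count_cat leq_addr.
Qed.

Lemma count_take_lt T (x0 : T) (p : pred T) s j1 j2 :
  j1 < j2 -> j1 < size s -> p (nth x0 s j1) ->
  count p (take j1 s) < count p (take j2 s).
Proof.
move=> lt12 j1s pj1; apply: leq_trans (count_take_mono p s lt12).
by rewrite (take_nth x0 j1s) -cats1 count_cat /= pj1 addn0 addn1.
Qed.

Lemma count_take_onto T (x0 : T) (p : pred T) s t : t < count p s ->
  exists j, [/\ j < size s, p (nth x0 s j) & count p (take j s) = t].
Proof.
elim: s t => [|a s IH] t //=; case pa: (p a) => /=.
  case: t => [|t]; first by exists 0; rewrite pa.
  by rewrite ltnS => /IH [j [js pj cj]]; exists j.+1; rewrite /= pa cj.
by rewrite add0n => /IH [j [js pj cj]]; exists j.+1; rewrite /= pa cj.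
Qed.

Lemma count_take_positions T (x0 : T) (p : pred T) s :
  [seq count p (take j s) | j <- [seq j <- iota 0 (size s) | p (nth x0 s j)]]
  = iota 0 (count p s).
Proof.
elim: s => [|a s IH] //=.
rewrite (iotaDl 1 0) filter_map.
have -> : [seq i <- iota 0 (size s) | preim (addn 1) (fun j => p (nth x0 (a :: s) j)) i]
          = [seq j <- iota 0 (size s) | p (nth x0 s j)] by apply: eq_filter.
have shift : [seq count p (take j (a :: s))
               | j <- [seq 1 + i | i <- [seq j <- iota 0 (size s) | p (nth x0 s j)]]]
             = [seq p a + i | i <- iota 0 (count p s)].
  by rewrite -IH -!map_comp; apply: eq_map => j /=; rewrite add0n.
by case: (p a) shift => /= ->; rewrite add0n -iotaDl.
Qed.

Section Positions.
Variables (Sigma : finType) (K : {fset zinterval}).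
Implicit Types (w : seq (letter Sigma K)) (S : letter Sigma K).

Lemma mem_Kpos w I j : (j \in Kpos w I) = (j < size w) && (inK Sigma I \in nth set0 w j).
Proof. by rewrite /Kpos mem_filter mem_iota add0n andbC. Qed.

Lemma extremity_Kpos w I j :
  ((firstpos w I == Some j) || (lastpos w I == Some j)) =
  (j \in Kpos w I) && ~~ (has (fun y => y < j) (Kpos w I) && has (fun y => j < y) (Kpos w I)).
Proof.
apply: extremity_sorted_ltn; apply: sorted_filter; [exact: ltn_trans | exact: iota_ltn_sorted].
Qed.

Lemma collapsed_uniqK w j I1 I2 : collapsed w -> j < size w ->
  inK Sigma I1 \in nth set0 w j -> inK Sigma I2 \in nth set0 w j -> I1 = I2.
Proof.
move=> /allP coll jw I1w I2w.
have /card_le1P /(_ I1) := coll _ (mem_nth set0 jw).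
by rewrite inE => /(_ I1w I2) /esym; rewrite !inE I2w => /eqP.
Qed.

Lemma anch_noK w j I : is_interval_word w -> j < size w ->
  anch Sigma K \in nth set0 w j -> (inK Sigma I \in nth set0 w j) = false.
Proof.
move=> /andP [_ /allP anch_ok] jw aw.
by have := anch_ok _ (mem_nth set0 jw); rewrite aw => /forallP /(_ I) /negbTE.
Qed.

Lemma elt_of_inl_extremity w j I : collapsed w -> j < size w ->
  elt_of (nth set0 w j) = Some (inl I) -> boundary w j ->
  (firstpos w I == Some j) || (lastpos w I == Some j).
Proof.
move=> coll jw; rewrite /elt_of /boundary jw; case: ifP => // aw.
case: pickP => //= I' I'w [<-] /existsP [I'' ext].
have : j \in Kpos w I'' by move: (ext); rewrite extremity_Kpos => /andP [].
by rewrite mem_Kpos => /andP [_ /(collapsed_uniqK coll jw I'w) ->].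
Qed.

Lemma typeof_count_le2 w I : collapsed w -> count (pred1 (inl I)) (typeof w) <= 2.
Proof.
move=> coll; rewrite /typeof count_pmap count_filter.
apply: (@leq_trans (count (fun j => firstpos w I == Some j) (iota 0 (size w))
                  + count (fun j => lastpos w I == Some j) (iota 0 (size w)))); last first.
  by apply: (@leq_add _ _ 1 1); apply: count_eq_Some_uniq; apply: iota_uniq.
rewrite -count_predUI; apply: leq_trans (leq_addr _ _); apply: sub_count => j /=.
case/andP; case elt_j: (elt_of (nth set0 w j)) => [y|] //= /eqP y_eq bd.
by apply: elt_of_inl_extremity => //; [case/andP: bd | rewrite elt_j y_eq].
Qed.

Lemma type_count_le2 (sq : seq (K + unit)%type) I :
  @is_type Sigma K sq -> count (pred1 (inl I)) sq <= 2.
Proof. by case=> w [_ coll <-]; apply: typeof_count_le2. Qed.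

End Positions.

Section Lifting.
Variables (Sigma : finType) (K : {fset zinterval}).
Implicit Types (S : letter Sigma K) (sq : seq (K + unit)%type).

(* A letter is "non-propositional" if it is not a subset of Σ; exactly these
   letters make A_seq advance to the next type symbol. *)
Definition nonprop S : bool := ~~ (S \subset propsym Sigma K).

(* At stage k, A reads the letter S in place of the letter S' read by A_seq:
   a non-propositional S' must contain c_k and is kept; a propositional S'
   is kept or enriched by one interval of K_k. *)
Definition lift_letter sq k (S' S : letter Sigma K) : Prop :=
  if nonprop S' then embed Sigma (cseq sq k) \in S' /\ S = S'
  else S = S' \/ exists2 I, I \in Kset sq k & S = inK Sigma I |: S'.

Lemma nonprop_embed c S : embed Sigma c \in S -> nonprop S.
Proof. by move=> cS; apply/negP => /subsetP/(_ _ cS); case: c {cS} => [?|[]]; rewrite inE. Qed.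

Lemma prop_noK S I : ~~ nonprop S -> (inK Sigma I \in S) = false.
Proof. by move=> /negPn/subsetP sub; apply/negP => /sub; rewrite inE. Qed.

Variables (Q : finType) (delta : Q -> letter Sigma K -> {set Q}) (sq : seq (K + unit)%type).

Lemma delta_seq_lift q i S' q1 i1 :
  delta_seq delta sq (q, i) S' (q1, i1) ->
  exists2 S, q1 \in delta q S & i1 = i + nonprop S' /\ lift_letter sq i S' S.
Proof.
rewrite /delta_seq; case: ifP => _.
  case: ifP => [cS' | _].
    case/andP => q1_in /eqP ->; exists S' => //.
    by rewrite /lift_letter (nonprop_embed cS') addn1.
  case: ifP => // prop_S'; have {}prop_S' : nonprop S' = false := prop_S'.
  case/andP => /eqP -> /orP [q1_in | /existsP [I /andP [IK q1_in]]].
    by exists S' => //; rewrite /lift_letter prop_S' addn0; split => //; left.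
  by exists (inK Sigma I |: S') => //; rewrite /lift_letter prop_S' addn0; split => //; right; exists I.
case: ifP => // /eqP ->; case/andP => /andP [sub q1_in] /eqP ->.
have prop_S' : nonprop S' = false by rewrite /nonprop sub.
by exists S' => //; rewrite /lift_letter prop_S' addn0; split => //; left.
Qed.

Lemma reach_lift w' q i qf :
  reach (delta_seq delta sq) (q, i) w' (qf, (size sq).+1) ->
  exists w, [/\ reach (fun q S q' => q' \in delta q S) q w qf, size w = size w',
     i + count nonprop w' = (size sq).+1 &
     forall j, j < size w' ->
       lift_letter sq (i + count nonprop (take j w')) (nth set0 w' j) (nth set0 w j)].
Proof.
elim: w' q i => [|S' w' IH] q i /=; first by case=> -> ->; exists [::]; rewrite addn0.
case=> [[q1 i1] [/delta_seq_lift [S q1_in [-> lift1]] /IH [w [run sz cnt lifts]]]].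
exists (S :: w); split => /=; [by exists q1 | by rewrite sz | by rewrite addnA |].
by case=> [|j] /=; [rewrite addn0 | rewrite ltnS addnA; apply: lifts].
Qed.

End Lifting.

Section LiftedWord.
Variables (Sigma : finType) (K : {fset zinterval}) (sq : seq (K + unit)%type).
(* The only property of the type used: no interval occurs thrice in it. *)
Hypothesis sq_le2 : forall I : K, count (pred1 (inl I)) sq <= 2.

Variables (w w' : seq (letter Sigma K)).
Hypotheses (w_iw : is_interval_word w) (w_coll : collapsed w).
Hypothesis size_lift : size w = size w'.
Hypothesis count_lift : count (@nonprop Sigma K) w' = size sq.

Let nb j := count (@nonprop Sigma K) (take j w').

Hypothesis lift : forall j, j < size w' ->
  lift_letter sq (nb j).+1 (nth set0 w' j) (nth set0 w j).

Let marks (I : K) j :=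
  [/\ j < size w', nonprop (nth set0 w' j) & cseq sq (nb j).+1 = inl I].

Lemma lift_nonK j x : j < size w' -> (forall I, x != inK Sigma I) ->
  (x \in nth set0 w j) = (x \in nth set0 w' j).
Proof.
move=> jn xK; move: (lift jn); rewrite /lift_letter; case: ifP => _; first by case=> _ ->.
by case=> [-> // | [I _ ->]]; rewrite in_setU1 (negbTE (xK I)).
Qed.

Lemma lift_nonprop j : j < size w' -> nonprop (nth set0 w' j) ->
  nth set0 w j = nth set0 w' j /\ embed Sigma (cseq sq (nb j).+1) \in nth set0 w' j.
Proof. by move=> jn np; move: (lift jn); rewrite /lift_letter np; case. Qed.

Lemma lift_prop_K j I : j < size w' -> ~~ nonprop (nth set0 w' j) ->
  inK Sigma I \in nth set0 w j -> I \in Kset sq (nb j).+1.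
Proof.
move=> jn p; move: (lift jn); rewrite /lift_letter (negbTE p).
case=> [-> | [I' I'K ->]]; first by rewrite prop_noK.
by rewrite in_setU1 prop_noK // orbF /inK => /eqP [->].
Qed.

Lemma nonprop_K j I : j < size w' -> nonprop (nth set0 w' j) ->
  (inK Sigma I \in nth set0 w' j) = (cseq sq (nb j).+1 == inl I).
Proof.
move=> jn np; have [eW] := lift_nonprop jn np; rewrite -eW.
have jw : j < size w by rewrite size_lift.
case: (cseq sq (nb j).+1) => [I'|[]] /= cW.
  by apply/idP/eqP => [/(collapsed_uniqK w_coll jw cW) -> | [<-]].
exact: anch_noK.
Qed.

Lemma nb_mono j1 j2 : j1 <= j2 -> nb j1 <= nb j2.
Proof. exact: count_take_mono. Qed.

Lemma nb_lt j1 j2 : j1 < j2 -> j1 < size w' -> nonprop (nth set0 w' j1) -> nb j1 < nb j2.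
Proof. exact: count_take_lt. Qed.

Lemma nb_onto t : t < size sq ->
  exists j, [/\ j < size w', nonprop (nth set0 w' j) & nb j = t].
Proof. by rewrite -count_lift; apply: count_take_onto. Qed.

Lemma marks_Kpos I j : marks I j -> j \in Kpos w I.
Proof.
case=> jn np cI; have [eW cW] := lift_nonprop jn np.
by rewrite mem_Kpos size_lift jn eW; move: cW; rewrite cI.
Qed.

Lemma marks_bracket j0 I : j0 < size w' -> inK Sigma I \in nth set0 w j0 ->
  exists jl jr, [/\ jl <= j0 <= jr, marks I jl & marks I jr].
Proof.
move=> j0n Iw; have [np | p] := boolP (nonprop (nth set0 w' j0)).
  have [eW _] := lift_nonprop j0n np.
  have mk : marks I j0 by split => //; apply/eqP; rewrite -nonprop_K // -eW.
  by exists j0, j0; rewrite leqnn.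
move: (lift_prop_K j0n p Iw); rewrite inE.
case/existsP => i1 /existsP [i2 /and5P [i1_gt0 i1_lt i2_ge /eqP c1 /eqP c2]].
have := ltn_ord i1; have := ltn_ord i2 => i2_le i1_le.
have [jl [jln npl nbl]] := nb_onto (t := i1.-1) ltac:(lia).
have [jr [jrn npr nbr]] := nb_onto (t := i2.-1) ltac:(lia).
exists jl, jr; split.
- apply/andP; split.
  + by rewrite leqNgt; apply/negP => /ltnW /nb_mono; lia.
  + by rewrite leqNgt; apply/negP => /nb_lt /(_ jrn npr); lia.
- by split => //; rewrite nbl prednK.
- by split => //; rewrite nbr prednK //; lia.
Qed.

(* no interval is marked three times, since it occurs at most twice in sq *)
Lemma marks_no_three I jl j jr : jl < j -> j < jr ->
  marks I jl -> marks I j -> marks I jr -> False.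
Proof.
move=> lt1 lt2 [jln npl cl] [jn np c] [jrn npr cr].
have := sq_le2 I; apply/negP; rewrite -ltnNge.
apply: (@three_nth_count _ (inr tt) _ _ _ _ _ (nb_lt lt1 jln npl) (nb_lt lt2 jn np) _ cl c cr).
by rewrite -count_lift -(take_size w') nb_lt.
Qed.

Lemma extremity_lift j I : j < size w' ->
  ((firstpos w I == Some j) || (lastpos w I == Some j)) = (inK Sigma I \in nth set0 w' j).
Proof.
move=> jn; rewrite extremity_Kpos mem_Kpos size_lift jn /=.
apply/idP/idP => [/andP [Iw not_inside] | Iw'].
  have [np | p] := boolP (nonprop (nth set0 w' j)).
    by have [<- _] := lift_nonprop jn np.
  have [jl [jr [/andP [le_l le_r] ml mr]]] := marks_bracket jn Iw.
  have [jl_ne jr_ne] : jl != j /\ jr != j.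
    by case: ml mr => _ npl _ [_ npr _]; split; apply: contraNneq p => <-.
  case/negP: not_inside; apply/andP; split; apply/hasP.
  - by exists jl; [apply: marks_Kpos | rewrite ltn_neqAle jl_ne].
  - by exists jr; [apply: marks_Kpos | rewrite ltn_neqAle eq_sym jr_ne].
have np : nonprop (nth set0 w' j) by apply: contraTT Iw' => /prop_noK ->.
have [eW _] := lift_nonprop jn np.
have mj : marks I j by split => //; apply/eqP; rewrite -nonprop_K.
rewrite eW Iw' /=; apply/negP => /andP [/hasP [j1 j1K lt1] /hasP [j2 j2K gt2]].
move: j1K j2K; rewrite !mem_Kpos size_lift => /andP [j1n Iw1] /andP [j2n Iw2].
have [jl [_ [/andP [le_l _] ml _]]] := marks_bracket j1n Iw1.
have [_ [jr [/andP [_ le_r] _ mr]]] := marks_bracket j2n Iw2.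
exact: (marks_no_three (leq_ltn_trans le_l lt1) (leq_trans gt2 le_r) ml mj mr).
Qed.

Lemma boundary_lift j : j < size w' -> boundary w j = nonprop (nth set0 w' j).
Proof.
move=> jn; rewrite /boundary size_lift jn lift_nonK //=.
rewrite (eq_existsb (fun I => extremity_lift I jn)).
apply/idP/idP => [/orP [aW | /existsP [I IW]] | /subsetPn [x xW]].
- exact: (@nonprop_embed _ _ (inr tt)).
- exact: (@nonprop_embed _ _ (inl I)).
case: x xW => [[a|I]|[]] xW; rewrite inE // => _.
- by apply/orP; right; apply/existsP; exists I.
- by rewrite xW.
Qed.

Lemma elt_of_lift j : j < size w' -> nonprop (nth set0 w' j) ->
  elt_of (nth set0 w j) = Some (cseq sq (nb j).+1).
Proof.
move=> jn np; have [eW cW] := lift_nonprop jn np; rewrite -eW in cW.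
have jw : j < size w by rewrite size_lift.
rewrite /elt_of; case: (cseq sq (nb j).+1) cW => [I|[]] /= cW; last by rewrite cW.
have -> : (anch Sigma K \in nth set0 w j) = false.
  by apply: contraTF cW => /(anch_noK I w_iw jw) ->.
case: pickP => [I' I'W | /(_ I)]; last by rewrite cW.
by rewrite (collapsed_uniqK w_coll jw I'W cW).
Qed.

Lemma typeof_lift : typeof w = sq.
Proof.
have bd : {in iota 0 (size w), boundary w =1 fun j => nonprop (nth set0 w' j)}.
  by move=> j; rewrite mem_iota size_lift => /andP [_ jn]; apply: boundary_lift.
rewrite /typeof (eq_in_filter bd) (@pmap_some _ _ _ (fun j => cseq sq (nb j).+1)); last first.
  by move=> j; rewrite mem_filter mem_iota size_lift => /and3P [np _ jn]; apply: elt_of_lift.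
rewrite size_lift -[RHS](mkseq_nth (inr tt)) /mkseq -count_lift -(count_take_positions set0).
by rewrite -map_comp.
Qed.

Lemma Norm_lift : Norm w = w'.
Proof.
apply: (@eq_from_nth _ set0); first by rewrite size_map size_iota.
move=> j; rewrite size_map size_iota size_lift => jn.
rewrite (nth_map 0) ?size_iota ?size_lift // nth_iota ?size_lift // add0n.
apply/setP => x; rewrite inE; case: x => [[a|I]|[]].
- by rewrite lift_nonK.
- exact: extremity_lift.
- by rewrite lift_nonK.
Qed.

End LiftedWord.

Local Open Scope fset_scope.

Theorem proposition3 (Sigma : finType) (K : {fset zinterval})
  (HK : forall I : zinterval, I \in K -> interval_ok I)
  (Q : finType) (init : Q) (delta : Q -> letter Sigma K -> {set Q}) (F : {set Q})
  (HA : forall w : seq (letter Sigma K),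
          accA init delta F w -> is_interval_word w /\ collapsed w)
  (sq : seq (K + unit)%type) (Hsq : @is_type Sigma K sq) :
  forall w' : seq (letter Sigma K),
    accAseq delta sq init F w' ->
    exists w : seq (letter Sigma K), @W_seq Sigma K sq w /\ w' = Norm w.
Proof.
move=> w' [[qf i] [run /andP [qf_F /eqP /= i_last]]]; subst i.
have [w [runA size_w count_w' lifts]] := reach_lift run.
have [w_iw w_coll] := HA w (ex_intro _ qf (conj runA qf_F)).
have sq_le2 I : count (pred1 (inl I)) sq <= 2 := type_count_le2 I Hsq.
have {}count_w' : count (@nonprop Sigma K) w' = size sq.
  by move: count_w'; rewrite add1n => -[].
have {}lifts j : j < size w' ->
    lift_letter sq (count (@nonprop Sigma K) (take j w')).+1 (nth set0 w' j) (nth set0 w j).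
  by move/lifts; rewrite add1n.
exists w; split; first split => //.
- exact: (typeof_lift sq_le2 w_iw w_coll size_w count_w' lifts).
- by rewrite (Norm_lift sq_le2 w_iw w_coll size_w count_w' lifts).
Qed.
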